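(* Let $n\geqslant 3$ and let $\alpha_1<\alpha_2<\cdots<\alpha_n$ be real numbers. Let $D$ be the $n\times n$ matrix with $D_{ij}=(\alpha_i-\alpha_j)^2$, and let $D'$ be obtained from $D$ by dividing every entry $D_{ij}$ by the sum $d_j$ of the entries of the $j$th column of $D$. For $k\in\mathbb{Z}/n\mathbb{Z}$ let $u_k\in\mathbb{R}^n$ have $i$th coordinate $(\alpha_i-\alpha_k)(\alpha_i-\alpha_{k+1})$, and let $s_k$ be the sum of the coordinates of $u_k$. Then $\operatorname{rank}(D)=3$, each $u_k$ lies in $\operatorname{col}(D)$, and the polytope $\mathcal{P}_{out}(D')$ is an $n$-gon whose vertices are exactly $v_k=s_k^{-1}u_k$, $k=1,\ldots,n$.
   Context: Indices are taken in $\mathbb{Z}/n\mathbb{Z}$, so that $\alpha_{n+1}=\alpha_1$. $\operatorname{col}(A)$ is the linear span of the columns of $A$; $\Delta_n=\{x\in\mathbb{R}^n: x_1+\cdots+x_n=1,\ x_i\geqslant0\}$; $\mathcal{P}_{out}(A)=\Delta_n\cap\operatorname{col}(A)$. *)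

From HB Require Import structures.
From mathcomp Require Import all_boot all_order all_algebra.
Set Implicit Arguments. Unset Strict Implicit. Unset Printing Implicit Defensive.
Import Order.TTheory GRing.Theory Num.Theory.
Local Open Scope ring_scope.

Section Defs.
Variable R : realFieldType.
Variable n : nat.

Definition sqdist_mx (a : 'I_n -> R) : 'M[R]_n :=
  \matrix_(i, j) (a i - a j) ^+ 2.

Definition colsum (A : 'M[R]_n) (j : 'I_n) : R := \sum_i A i j.

Definition colnormalize (A : 'M[R]_n) : 'M[R]_n :=
  \matrix_(i, j) (A i j / colsum A j).

Definition in_col (A : 'M[R]_n) (x : 'cV[R]_n) : Prop :=
  exists y : 'cV[R]_n, x = A *m y.

Definition in_simplex (x : 'cV[R]_n) : Prop :=
  (\sum_i x i 0 = 1) /\ (forall i, 0 <= x i 0).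

Definition P_out (A : 'M[R]_n) (x : 'cV[R]_n) : Prop :=
  in_simplex x /\ in_col A x.

Definition uvec (a : 'I_n -> R) (k : 'I_n) : 'cV[R]_n :=
  \col_i ((a i - a k) * (a i - a (ordS k))).

Definition coordsum (x : 'cV[R]_n) : R := \sum_i x i 0.

Definition in_conv (m : nat) (v : 'I_m -> 'cV[R]_n) (x : 'cV[R]_n) : Prop :=
  exists l : 'I_m -> R, (forall k, 0 <= l k) /\ (\sum_k l k = 1) /\
    x = \sum_k l k *: v k.

Definition extreme_point (P : 'cV[R]_n -> Prop) (x : 'cV[R]_n) : Prop :=
  P x /\ forall y z (t : R), P y -> P z -> 0 < t -> t < 1 ->
    x = t *: y + (1 - t) *: z -> y = x /\ z = x.

(* P is an m-gon with vertices exactly v_0,...,v_{m-1}: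
   P is the convex hull of the v_k, the v_k are pairwise distinct,
   the vertices (extreme points) of P are exactly the v_k,
   and P is 2-dimensional (affine span of the v_k has dimension 2). *)
Definition is_polygon_with_vertices (m : nat) (P : 'cV[R]_n -> Prop)
    (v : 'I_m -> 'cV[R]_n) : Prop :=
  (forall x, P x <-> in_conv v x) /\
  injective v /\
  (forall x, extreme_point P x <-> exists k, x = v k) /\
  (forall k0 : 'I_m, \rank (\matrix_(k < m, i < n) (v k i 0 - v k0 i 0)) = 2%N).

End Defs.

From HB Require Import structures.
From mathcomp Require Import all_boot all_order all_algebra.
From mathcomp Require Import ring lra zify.
Import Order.TTheory GRing.Theory Num.Theory.
Local Open Scope ring_scope.
Set Implicit Arguments. Unset Strict Implicit. Unset Printing Implicit Defensive.

(* Column j of D lists the values at the nodes a_i of the quadratic (X - a_j)^2, so col(D)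
   lies in the space of node values of polynomials of degree at most 2, i.e. the row space
   of the 3 x n Vandermonde matrix; a nonzero 3 x 3 minor gives equality, hence rank D = 3,
   and rescaling columns does not change the span.  So P_out(D') consists of the nonnegative
   such vectors with coordinate sum 1.  A quadratic with three roots vanishes, so a point of
   P_out(D') vanishing at two consecutive nodes is v_k; hence each v_k is extreme.
   Conversely, w = -u_n is positive exactly at the interior nodes: subtracting from x the
   largest multiple of w keeping it nonnegative leaves a nonnegative quadratic vanishing at
   an interior node a_m, which is a nonnegative combination of u_(m-1) and u_m.  Hence
   P_out(D') is the convex hull of the v_k. *)

Lemma det_mx22 (R : comRingType) (A : 'M[R]_2) :
  \det A = A 0 0 * A 1 1 - A 0 1 * A 1 0.
Proof.
pose f (i j : nat) := A (inord i) (inord j).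
have -> : A = \matrix_(i, j) f i j by apply/matrixP => i j; rewrite mxE /f !inord_val.
rewrite (expand_det_row _ 0) !big_ord_recr big_ord0 /cofactor /= !det_mx11 !mxE /=.
ring.
Qed.

Lemma det_mx33 (R : comRingType) (A : 'M[R]_3) : \det A =
  A 0 0 * (A 1 1 * A 2 2 - A 1 2 * A 2 1)
  - A 0 1 * (A 1 0 * A 2 2 - A 1 2 * A 2 0)
  + A 0 2 * (A 1 0 * A 2 1 - A 1 1 * A 2 0).
Proof.
pose f (i j : nat) := A (inord i) (inord j).
have -> : A = \matrix_(i, j) f i j by apply/matrixP => i j; rewrite mxE /f !inord_val.
rewrite (expand_det_row _ 0) !big_ord_recr big_ord0 /cofactor /= !det_mx22 !mxE /=.
ring.
Qed.

Lemma mxrank_mxsub (R : fieldType) m n m' n' (f : 'I_m' -> 'I_m) (g : 'I_n' -> 'I_n)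
    (A : 'M[R]_(m, n)) : (\rank (mxsub f g A) <= \rank A)%N.
Proof.
rewrite -[A in mxsub _ _ A]mul1mx mxsub_mul.
apply: leq_trans (mxrankM_maxr _ _) _.
by rewrite -[A in colsub _ A]mulmx1 -mulmx_colsub mxrankM_maxl.
Qed.

Lemma mxrank_lt_annihilated (R : fieldType) m1 m2 n (A : 'M[R]_(m1, n))
    (B : 'M[R]_(m2, n)) (u : 'rV[R]_n) (e : 'cV[R]_n) :
  (A <= B)%MS -> (u <= B)%MS -> A *m e = 0 -> u *m e != 0 -> (\rank A < \rank B)%N.
Proof.
move=> sAB suB Ae ue.
have ltAu : (A < A + u)%MS.
  rewrite ltmxE addsmxSl /=; apply: contra ue => /(submx_trans (addsmxSr A u)).
  by case/submxP=> y ->; rewrite -mulmxA Ae mulmx0.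
by apply: leq_trans (rank_ltmx ltAu) (mxrankS _); rewrite addsmx_sub sAB.
Qed.

Lemma val_ordS n (k : 'I_n) : (ordS k : nat) = if k.+1 == n then 0%N else k.+1.
Proof.
rewrite /=; case: eqP => [->|h]; first by rewrite modnn.
by rewrite modn_small //; have := ltn_ord k; lia.
Qed.

Lemma val_ord_pred n (k : 'I_n) : (0 < k)%N -> (ord_pred k : nat) = k.-1.
Proof.
move=> k0; move: (ord_predK k); move: (ord_pred k) => p /(congr1 (@nat_of_ord n)).
by rewrite val_ordS; case: eqP => _ /= h; lia.
Qed.

Lemma ordS_neq3 n (k : 'I_n) : (3 <= n)%N ->
  [/\ k != ordS k, k != ordS (ordS k) & ordS k != ordS (ordS k)].
Proof.
move=> n3; rewrite -!(inj_eq (@ord_inj n)) !val_ordS; have := ltn_ord k.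
by do ![case: ifP => /eqP ?]; split; apply/eqP; lia.
Qed.

Lemma uniq_ordS3 n (k : 'I_n) : (3 <= n)%N -> uniq [:: k; ordS k; ordS (ordS k)].
Proof. by case/(ordS_neq3 k) => h1 h2 h3; rewrite /= !inE !negb_or h1 h2 h3. Qed.

Lemma psumr_gt0 (R : numDomainType) (T : finType) (f : T -> R) j :
  (forall i, 0 <= f i) -> 0 < f j -> 0 < \sum_i f i.
Proof.
move=> f0 fj; rewrite (bigD1 j) //=; apply: lt_le_trans fj _.
by rewrite lerDl sumr_ge0.
Qed.

Lemma convex_comb_eq0 (R : realFieldType) (t p q : R) :
  0 <= p -> 0 <= q -> 0 < t -> t < 1 -> t * p + (1 - t) * q = 0 -> p = 0 /\ q = 0.
Proof. by move=> *; split; nra. Qed.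

Lemma exists_min_ratio (R : realFieldType) (T : finType) (x w : T -> R) i0 :
  0 < w i0 -> (forall i, 0 <= x i) -> (forall i, 0 <= w i) ->
  exists2 m, 0 < w m & forall i, x m / w m * w i <= x i.
Proof.
move=> wi0 x0 w0.
have [m wm minm] := arg_minP (fun i => x i / w i) (wi0 : i0 \in [pred i | 0 < w i]).
exists m => // i; have [wi|wi] := ltP 0 (w i); first by rewrite -ler_pdivlMr // minm.
have -> : w i = 0 by apply/le_anti; rewrite wi w0.
by rewrite mulr0.
Qed.

Section ColumnSpace.
Variables (R : realFieldType) (n : nat).
Implicit Types (A : 'M[R]_n) (x : 'cV[R]_n).

Lemma in_colP A x : in_col A x <-> (x^T <= A^T)%MS.
Proof.
split=> [[y ->]|/submxP [y xy]]; first by rewrite trmx_mul submxMl.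
by exists y^T; rewrite -[x]trmxK xy trmx_mul trmxK.
Qed.

Lemma colnormalize_mul A y :
  colnormalize A *m y = A *m \col_j (y j 0 / colsum A j).
Proof.
apply/matrixP => i k; rewrite !mxE; apply: eq_bigr => j _.
by rewrite !mxE [k]ord1 mulrAC mulrA.
Qed.

Lemma in_col_colnormalize A x :
  (forall j, colsum A j != 0) -> in_col (colnormalize A) x <-> in_col A x.
Proof.
move=> A0; split=> [[y ->]|[y ->]]; first by rewrite colnormalize_mul; eexists.
exists (\col_j (colsum A j * y j 0)); rewrite colnormalize_mul; congr (_ *m _).
by apply/matrixP => j k; rewrite !mxE [k]ord1 mulrAC divff ?mul1r.
Qed.

Lemma coordsumZ c x : coordsum (c *: x) = c * coordsum x.
Proof. by rewrite /coordsum mulr_sumr; apply: eq_bigr => i _; rewrite mxE. Qed.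

Lemma coordsumD x y : coordsum (x + y) = coordsum x + coordsum y.
Proof. by rewrite /coordsum -big_split; apply: eq_bigr => i _; rewrite mxE. Qed.

Lemma coordsum_sum (I : finType) (x : I -> 'cV[R]_n) :
  coordsum (\sum_k x k) = \sum_k coordsum (x k).
Proof. by rewrite /coordsum exchange_big; apply: eq_bigr => i _; rewrite summxE. Qed.

End ColumnSpace.

Section ConvexHull.
Variables (R : realFieldType) (n m : nat) (v : 'I_m -> 'cV[R]_n).

Lemma in_conv3 (i j k : 'I_m) (b c d : R) :
  0 <= b -> 0 <= c -> 0 <= d -> b + c + d = 1 ->
  in_conv v (b *: v i + c *: v j + d *: v k).
Proof.
move=> b0 c0 d0 bcd; pose e (h : 'I_m) (t : R) l := if l == h then t else 0.
have sum_e h t : \sum_l e h t l = t.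
  by rewrite (bigD1 h) //= /e eqxx big1 ?addr0 // => l /negbTE ->.
have sum_ev h t : \sum_l e h t l *: v l = t *: v h.
  by rewrite (bigD1 h) //= /e eqxx big1 ?addr0 // => l /negbTE ->; rewrite scale0r.
exists (fun l => e i b l + e j c l + e k d l); split; last split.
- by move=> l; rewrite !addr_ge0 // /e; case: eqP.
- by rewrite !big_split /= !sum_e.
- by under eq_bigr do rewrite !scalerDl; rewrite !big_split /= !sum_ev.
Qed.

Lemma in_conv_point k : in_conv v (v k).
Proof.
have := in_conv3 k k k ler01 (lexx 0) (lexx 0).
by rewrite scale1r !scale0r !addr0; apply.
Qed.

Lemma extreme_point_conv (P : 'cV[R]_n -> Prop) x :
  (forall y, in_conv v y -> P y) -> extreme_point P x -> in_conv v x ->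
  exists k, x = v k.
Proof.
move=> convP [_ ext] [l [l0 [l1 xl]]].
have [k /andP [_ lk0]] : exists k, true && (0 < l k).
  by apply: psumr_neq0P => // /eqP; rewrite l1 oner_eq0.
have rest : \sum_(j | j != k) l j = 1 - l k.
  by rewrite -l1 [\sum_i l i](bigD1 k) //= addrAC subrr add0r.
have [lk1|lk1] := eqVneq (l k) 1.
  exists k; rewrite xl (bigD1 k) //= lk1 scale1r big1 ?addr0 // => j jk.
  have rest0 : \sum_(j | j != k) l j = 0 by rewrite rest lk1 subrr.
  by rewrite (psumr_eq0P (fun j _ => l0 j) rest0 jk) scale0r.
have lk_lt1 : l k < 1.
  by rewrite lt_neqAle lk1 -subr_ge0 -rest sumr_ge0.
have lk1' : 1 - l k != 0 by rewrite subr_eq0 eq_sym.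
pose z := \sum_j (if j == k then 0 else l j / (1 - l k)) *: v j.
have Pz : P z.
  apply/convP; exists (fun j => if j == k then 0 else l j / (1 - l k)).
  split; last split => //.
    by move=> j; case: eqP => // _; rewrite divr_ge0 ?l0 // subr_ge0 ltW.
  rewrite (bigD1 k) //= eqxx add0r.
  transitivity ((\sum_(j | j != k) l j) / (1 - l k)); last by rewrite rest divff.
  by rewrite mulr_suml; apply: eq_bigr => j /negbTE ->.
have xz : x = l k *: v k + (1 - l k) *: z.
  rewrite xl (bigD1 k) //= scaler_sumr [in RHS](bigD1 k) //= eqxx scale0r scaler0 add0r.
  congr (_ + _); apply: eq_bigr => j /negbTE ->.
  by rewrite scalerA mulrC divfK.
have [vx _] := ext _ _ _ (convP _ (in_conv_point k)) Pz lk0 lk_lt1 xz.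
by exists k.
Qed.

End ConvexHull.

Lemma tr_sqdist_mx (R : realFieldType) n (a : 'I_n -> R) : (sqdist_mx a)^T = sqdist_mx a.
Proof. by apply/matrixP => i j; rewrite !mxE -sqrrN opprB. Qed.

Section SquaredDistanceMatrix.
Variables (R : realFieldType) (n : nat) (a : 'I_n -> R).
Hypothesis n_ge3 : (3 <= n)%N.
Hypothesis a_incr : forall i j : 'I_n, (i < j)%N -> a i < a j.
Implicit Types (x y : 'cV[R]_n) (i j k : 'I_n).

Lemma le_a i j : (i <= j)%N -> a i <= a j.
Proof. by rewrite leq_eqVlt => /orP [/eqP/val_inj ->|/a_incr/ltW]. Qed.

Lemma a_inj : injective a.
Proof.
move=> i j aij; case: (ltngtP i j) => [/a_incr|/a_incr|/val_inj //]; by rewrite aij ltxx.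
Qed.

Definition vdm : 'M[R]_(3, n) := Vandermonde 3 (\row_i a i).

Definition quadratic x := (x^T <= vdm)%MS.

Lemma quadraticP x : reflect
  (exists2 p : {poly R}, (size p <= 3)%N & forall i, x i 0 = p.[a i]) (quadratic x).
Proof.
apply: (iffP submxP) => [[c xc]|[p sp xp]].
  exists (\poly_(r < 3) c 0 (inord r)) => [|i]; first exact: size_poly.
  move/matrixP/(_ 0 i): xc; rewrite !mxE horner_poly => ->.
  by apply: eq_bigr => r _; rewrite !mxE inord_val.
exists (\row_r p`_r); apply/matrixP => j i; rewrite [j]ord1 !mxE xp.
by rewrite (horner_coef_wide _ sp); apply: eq_bigr => r _; rewrite !mxE.
Qed.

Lemma quadraticD x y : quadratic x -> quadratic y -> quadratic (x + y).
Proof. by move=> qx qy; rewrite /quadratic linearD addmx_sub. Qed.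

Lemma quadraticZ c x : quadratic x -> quadratic (c *: x).
Proof. by move=> qx; rewrite /quadratic linearZ scalemx_sub. Qed.

Lemma quadraticB x y : quadratic x -> quadratic y -> quadratic (x - y).
Proof. by move=> qx qy; apply: quadraticD => //; rewrite -scaleN1r quadraticZ. Qed.

Lemma quadratic_sum (I : finType) (x : I -> 'cV[R]_n) :
  (forall h, quadratic (x h)) -> quadratic (\sum_h x h).
Proof. by move=> qx; rewrite /quadratic linear_sum; apply: summx_sub => h _; apply: qx. Qed.

Lemma quadratic_eq x y (i j k : 'I_n) : quadratic x -> quadratic y -> uniq [:: i; j; k] ->
  x i 0 = y i 0 -> x j 0 = y j 0 -> x k 0 = y k 0 -> x = y.
Proof.
move=> /quadraticP [p sp xp] /quadraticP [q sq yq] uijk xyi xyj xyk.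
suff pq : p = q by apply/matrixP => l m; rewrite [m]ord1 xp yq pq.
apply/eqP; rewrite -subr_eq0; apply/eqP/(@roots_geq_poly_eq0 _ _ [:: a i; a j; a k]).
- by rewrite /= /root !hornerD !hornerN -!xp -!yq xyi xyj xyk !subrr eqxx.
- by rewrite (map_inj_uniq a_inj [:: i; j; k]).
- by rewrite (leq_trans (size_polyD _ _)) // size_polyN geq_max sp sq.
Qed.

Notation D := (sqdist_mx a).

Lemma sqdist_mx_sub_vdm : (D <= vdm)%MS.
Proof.
apply/row_subP => i; rewrite -[row i D]trmxK; apply/quadraticP.
exists (('X - (a i)%:P) ^+ 2); first by rewrite size_exp_XsubC.
by move=> j; rewrite !mxE horner_exp hornerXsubC -sqrrN opprB.
Qed.

Lemma rank_sqdist_mx_ge3 : (3 <= \rank D)%N.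
Proof.
pose f := widen_ord n_ge3; apply: leq_trans (mxrank_mxsub f f D).
rewrite mxrank_unit // unitmxE unitfE det_mx33 !mxE.
set p := a (f 0); set q := a (f 1); set r := a (f 2).
have dpq : p - q != 0 by rewrite subr_eq0 (inj_eq a_inj).
have dpr : p - r != 0 by rewrite subr_eq0 (inj_eq a_inj).
have dqr : q - r != 0 by rewrite subr_eq0 (inj_eq a_inj).
have -> : (p - p) ^+ 2 * ((q - q) ^+ 2 * (r - r) ^+ 2 - (q - r) ^+ 2 * (r - q) ^+ 2) -
  (p - q) ^+ 2 * ((q - p) ^+ 2 * (r - r) ^+ 2 - (q - r) ^+ 2 * (r - p) ^+ 2) +
  (p - r) ^+ 2 * ((q - p) ^+ 2 * (r - q) ^+ 2 - (q - q) ^+ 2 * (r - p) ^+ 2)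
  = 2 * ((p - q) * (p - r) * (q - r)) ^+ 2 by ring.
by rewrite mulf_neq0 ?pnatr_eq0 ?sqrf_eq0 ?mulf_neq0.
Qed.

Lemma eqmx_sqdist_vdm : (D == vdm)%MS.
Proof.
rewrite sqdist_mx_sub_vdm -(mxrank_leqif_sup sqdist_mx_sub_vdm).2 eqn_leq.
by rewrite mxrankS ?sqdist_mx_sub_vdm // (leq_trans (rank_leq_row vdm)) ?rank_sqdist_mx_ge3.
Qed.

Lemma rank_vdm : \rank vdm = 3%N.
Proof.
apply/anti_leq; rewrite rank_leq_row -(eqmx_rank eqmx_sqdist_vdm).
exact: rank_sqdist_mx_ge3.
Qed.

Lemma rank_sqdist_mx : \rank D = 3%N.
Proof. by rewrite (eqmx_rank eqmx_sqdist_vdm) rank_vdm. Qed.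

Lemma in_col_sqdist_mx x : in_col D x <-> quadratic x.
Proof. by rewrite in_colP tr_sqdist_mx (eqmxP eqmx_sqdist_vdm). Qed.

Lemma colsum_sqdist_gt0 j : 0 < colsum D j.
Proof.
have [jS _ _] := ordS_neq3 j n_ge3.
apply: (psumr_gt0 (j := ordS j)) => [i|]; rewrite mxE ?sqr_ge0 //.
by rewrite lt_def sqr_ge0 sqrf_eq0 subr_eq0 (inj_eq a_inj) eq_sym jS.
Qed.

Lemma in_col_normalized x : in_col (colnormalize D) x <-> quadratic x.
Proof.
rewrite in_col_colnormalize ?in_col_sqdist_mx // => j.
by rewrite gt_eqF ?colsum_sqdist_gt0.
Qed.

Notation polytope := (P_out (colnormalize D)).

Lemma polytopeE x : polytope x <-> in_simplex x /\ quadratic x.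
Proof. by rewrite /P_out in_col_normalized. Qed.

Lemma quadratic_uvec k : quadratic (uvec a k).
Proof.
apply/quadraticP; exists (('X - (a k)%:P) * ('X - (a (ordS k))%:P)).
  by apply: leq_trans (size_polyMleq _ _) _; rewrite !size_XsubC.
by move=> i; rewrite mxE hornerM !hornerXsubC.
Qed.

Lemma uvec_eq0 k i : (uvec a k i 0 == 0) = (i == k) || (i == ordS k).
Proof. by rewrite mxE mulf_eq0 !subr_eq0 !(inj_eq a_inj). Qed.

Lemma uvec_root_l k : uvec a k k 0 = 0.
Proof. by apply/eqP; rewrite uvec_eq0 eqxx. Qed.

Lemma uvec_root_r k : uvec a k (ordS k) 0 = 0.
Proof. by apply/eqP; rewrite uvec_eq0 eqxx orbT. Qed.

Lemma uvec_ge0 k i : (k.+1 < n)%N -> 0 <= uvec a k i 0.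
Proof.
move=> kn; have Sk : ordS k = k.+1 :> nat by rewrite val_ordS ltn_eqF.
rewrite mxE; case: (leqP i k) => ik.
  by rewrite mulr_le0 // subr_le0 le_a // Sk ltnW.
by rewrite mulr_ge0 // subr_ge0 le_a ?Sk // ltnW.
Qed.

Lemma uvec_ordSS_neq0 k : uvec a k (ordS (ordS k)) 0 != 0.
Proof.
have [kS kSS SSS] := ordS_neq3 k n_ge3.
by rewrite uvec_eq0 ![ordS (ordS k) == _]eq_sym negb_or kSS SSS.
Qed.

Fact ilast_subproof : (n.-1 < n)%N.
Proof. by rewrite ltn_predL (leq_trans _ n_ge3). Qed.

Definition ilast : 'I_n := Ordinal ilast_subproof.

Lemma ordS_ilast : ordS ilast = 0%N :> nat.
Proof. by rewrite val_ordS prednK ?eqxx // (leq_trans _ n_ge3). Qed.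

Lemma uvec_ilast_le0 i : uvec a ilast i 0 <= 0.
Proof.
rewrite mxE mulr_le0_ge0 // ?subr_le0 ?subr_ge0 le_a ?ordS_ilast //.
by rewrite /= -ltnS prednK ?ltn_ord // (leq_trans _ n_ge3).
Qed.

Lemma coordsum_uvec_gt0 k : (k.+1 < n)%N -> 0 < coordsum (uvec a k).
Proof.
move=> kn; apply: (psumr_gt0 (j := ordS (ordS k))) => [i|]; first exact: uvec_ge0.
by rewrite lt_def uvec_ordSS_neq0 uvec_ge0.
Qed.

Lemma coordsum_uvec_ilast_lt0 : coordsum (uvec a ilast) < 0.
Proof.
rewrite -oppr_gt0 -sumrN; apply: (psumr_gt0 (j := ordS (ordS ilast))) => [i|].
  by rewrite oppr_ge0 uvec_ilast_le0.
by rewrite lt_def oppr_eq0 uvec_ordSS_neq0 oppr_ge0 uvec_ilast_le0.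
Qed.

Lemma coordsum_uvec_neq0 k : coordsum (uvec a k) != 0.
Proof.
have [kn|] := ltnP k.+1 n; first by rewrite gt_eqF ?coordsum_uvec_gt0.
move=> nk; have -> : k = ilast by apply: val_inj => /=; have := ltn_ord k; lia.
by rewrite lt_eqF ?coordsum_uvec_ilast_lt0.
Qed.

Definition vertex k : 'cV[R]_n := (coordsum (uvec a k))^-1 *: uvec a k.

Lemma uvec_vertex k : uvec a k = coordsum (uvec a k) *: vertex k.
Proof. by rewrite scalerA divff ?scale1r ?coordsum_uvec_neq0. Qed.

Lemma coordsum_vertex k : coordsum (vertex k) = 1.
Proof. by rewrite coordsumZ mulVf ?coordsum_uvec_neq0. Qed.

Lemma vertex_ge0 k i : 0 <= vertex k i 0.
Proof.
rewrite mxE; have [kn|nk] := ltnP k.+1 n.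
  by rewrite mulr_ge0 ?uvec_ge0 // invr_ge0 ltW ?coordsum_uvec_gt0.
have -> : k = ilast by apply: val_inj => /=; have := ltn_ord k; lia.
by rewrite mulr_le0 ?uvec_ilast_le0 // invr_le0 ltW ?coordsum_uvec_ilast_lt0.
Qed.

Lemma vertex_eq0 k i : (vertex k i 0 == 0) = (i == k) || (i == ordS k).
Proof. by rewrite mxE mulf_eq0 invr_eq0 (negbTE (coordsum_uvec_neq0 k)) uvec_eq0. Qed.

Lemma vertex_root_l k : vertex k k 0 = 0.
Proof. by apply/eqP; rewrite vertex_eq0 eqxx. Qed.

Lemma vertex_root_r k : vertex k (ordS k) 0 = 0.
Proof. by apply/eqP; rewrite vertex_eq0 eqxx orbT. Qed.

Lemma quadratic_vertex k : quadratic (vertex k).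
Proof. exact/quadraticZ/quadratic_uvec. Qed.

Lemma polytope_vertex k : polytope (vertex k).
Proof.
apply/polytopeE; split; last exact: quadratic_vertex.
by split; [exact: coordsum_vertex | exact: vertex_ge0].
Qed.

Lemma vertex_inj : injective vertex.
Proof.
move=> k l kl; have [lS lSS SSS] := ordS_neq3 l n_ge3.
have /[!vertex_eq0] /orP [/eqP //|/eqP kSl] : vertex l k 0 == 0 by rewrite -kl vertex_eq0 eqxx.
have : vertex l (ordS k) 0 == 0 by rewrite -kl vertex_eq0 eqxx orbT.
by rewrite vertex_eq0 kSl ![ordS (ordS l) == _]eq_sym (negbTE lSS) (negbTE SSS).
Qed.

Lemma eq_vertex y k : in_simplex y -> quadratic y ->
  y k 0 = 0 -> y (ordS k) 0 = 0 -> y = vertex k.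
Proof.
move=> [sy _] qy yk ySk; set j := ordS (ordS k); set c := y j 0 / uvec a k j 0.
have yc : y = c *: uvec a k.
  apply: (quadratic_eq (k := j) qy _ (uniq_ordS3 k n_ge3)).
  - exact/quadraticZ/quadratic_uvec.
  - by rewrite mxE yk uvec_root_l mulr0.
  - by rewrite mxE ySk uvec_root_r mulr0.
  - by rewrite mxE /c divfK ?uvec_ordSS_neq0.
have cs : c * coordsum (uvec a k) = 1 by rewrite -coordsumZ -yc.
by rewrite yc uvec_vertex scalerA cs scale1r.
Qed.

Lemma extreme_vertex k : extreme_point polytope (vertex k).
Proof.
split=> [|y z t /polytopeE [[sy y0] qy] /polytopeE [[sz z0] qz] t0 t1 vyz].
  exact: polytope_vertex.
have vanish i : vertex k i 0 = 0 -> y i 0 = 0 /\ z i 0 = 0.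
  by move=> vi; apply: (convex_comb_eq0 (y0 i) (z0 i) t0 t1); rewrite -vi vyz !mxE.
have [yk zk] := vanish k (vertex_root_l k).
have [ySk zSk] := vanish (ordS k) (vertex_root_r k).
by split; apply: eq_vertex.
Qed.

Lemma polytope_conv x : in_conv vertex x -> polytope x.
Proof.
case=> l [l0 [l1 ->]]; apply/polytopeE; split; first split.
- rewrite -/(coordsum _) coordsum_sum -[RHS]l1; apply: eq_bigr => k _.
  by rewrite coordsumZ coordsum_vertex mulr1.
- by move=> i; rewrite summxE sumr_ge0 // => k _; rewrite mxE mulr_ge0 ?vertex_ge0.
- by apply: quadratic_sum => k; rewrite quadraticZ ?quadratic_vertex.
Qed.

Lemma nonneg_quadratic_split y k : (k.+2 < n)%N -> quadratic y ->
  (forall i, 0 <= y i 0) -> y (ordS k) 0 = 0 ->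
  exists b c, [/\ 0 <= b, 0 <= c & y = b *: uvec a k + c *: uvec a (ordS k)].
Proof.
move=> kn qy y0 ySk; set m := ordS k; set j := ordS m.
have Sk : m = k.+1 :> nat by rewrite val_ordS ltn_eqF // ltnW.
have [kS kSS _] := ordS_neq3 k n_ge3.
have ukj : 0 < uvec a k j 0 by rewrite lt_def uvec_ordSS_neq0 uvec_ge0 // ltnW.
have umk : 0 < uvec a m k 0 by rewrite lt_def uvec_eq0 negb_or kS kSS uvec_ge0 // Sk.
pose b := y j 0 / uvec a k j 0; pose c := y k 0 / uvec a m k 0.
have bcE i : (b *: uvec a k + c *: uvec a m) i 0 = b * uvec a k i 0 + c * uvec a m i 0.
  by rewrite mxE [(b *: uvec a k) _ _]mxE [(c *: uvec a m) _ _]mxE.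
exists b, c; split; rewrite ?divr_ge0 ?y0 ?ltW //.
apply: (quadratic_eq (k := j) qy _ (uniq_ordS3 k n_ge3)); rewrite ?bcE.
- by rewrite quadraticD ?quadraticZ ?quadratic_uvec.
- by rewrite uvec_root_l mulr0 add0r /c divfK ?gt_eqF.
- by rewrite uvec_root_r uvec_root_l !mulr0 addr0.
- by rewrite uvec_root_r mulr0 addr0 /b divfK ?gt_eqF.
Qed.

Lemma polytope_decomposition x : polytope x -> exists k b c d,
  [/\ (k.+2 < n)%N, 0 <= b, 0 <= c, 0 <= d &
      x = b *: uvec a k + c *: uvec a (ordS k) - d *: uvec a ilast].
Proof.
move=> /polytopeE [[_ x0] qx]; pose w i := - uvec a ilast i 0.
have w0 i : 0 <= w i by rewrite oppr_ge0 uvec_ilast_le0.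
have w_eq0 i : (w i == 0) = (i == ilast) || (i == ordS ilast) by rewrite oppr_eq0 uvec_eq0.
have [LS LSS SSS] := ordS_neq3 ilast n_ge3.
have [m wm xm] : exists2 m, 0 < w m & forall i, x m 0 / w m * w i <= x i 0.
  apply: (exists_min_ratio (i0 := ordS (ordS ilast)) _ x0 w0).
  by rewrite lt_def w_eq0 w0 ![ordS (ordS ilast) == _]eq_sym negb_or LSS SSS.
have [mL m0] : m != ilast /\ m != ordS ilast by apply/norP; rewrite -w_eq0 gt_eqF.
rewrite -!(inj_eq (@ord_inj n)) ordS_ilast /= in mL m0.
set d := x m 0 / w m; set k := ord_pred m.
have kn : (k.+2 < n)%N.
  by rewrite val_ord_pred ?lt0n // prednK ?lt0n //; have := ltn_ord m; lia.
have y0 i : 0 <= (x + d *: uvec a ilast) i 0.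
  by rewrite mxE [(d *: uvec a ilast) _ _]mxE; move: (xm i); rewrite /w mulrN -subr_ge0 opprK.
have ym : (x + d *: uvec a ilast) (ordS k) 0 = 0.
  rewrite ord_predK mxE [(d *: uvec a ilast) _ _]mxE -[uvec a ilast m 0]opprK -/(w m).
  by rewrite mulrN /d divfK ?subrr ?gt_eqF.
have [b [c [b0 c0 xbc]]] :=
  nonneg_quadratic_split kn (quadraticD qx (quadraticZ _ (quadratic_uvec _))) y0 ym.
exists k, b, c, d; split; rewrite ?divr_ge0 ?x0 ?w0 //.
by rewrite -xbc addrK.
Qed.

Lemma polytope_sub_conv x : polytope x -> in_conv vertex x.
Proof.
move=> Px; have [[sx _] _] := (polytopeE x).1 Px.
have [k [b [c [d [kn b0 c0 d0 xE]]]]] := polytope_decomposition Px.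
have Sk : (ordS k).+1 = k.+2 by rewrite val_ordS ltn_eqF // ltnW.
have sk := coordsum_uvec_gt0 (ltnW kn).
have sSk : 0 < coordsum (uvec a (ordS k)) by rewrite coordsum_uvec_gt0 ?Sk.
have sL := coordsum_uvec_ilast_lt0.
have {}xE : x = (b * coordsum (uvec a k)) *: vertex k +
    (c * coordsum (uvec a (ordS k))) *: vertex (ordS k) +
    (- d * coordsum (uvec a ilast)) *: vertex ilast.
  by rewrite xE -!scalerA -!uvec_vertex scaleNr.
rewrite xE; apply: in_conv3.
- by rewrite mulr_ge0 // ltW.
- by rewrite mulr_ge0 // ltW.
- by rewrite mulNr oppr_ge0 mulr_ge0_le0 // ltW.
- move: sx; rewrite -/(coordsum x) xE !coordsumD ![coordsum (_ *: vertex _)]coordsumZ.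
  by rewrite !coordsum_vertex !mulr1.
Qed.

Definition vertex_diff_mx k0 : 'M[R]_n := \matrix_(k, i) (vertex k i 0 - vertex k0 i 0).

Lemma vertex_diff_mxE k0 k i : vertex_diff_mx k0 k i = vertex k i 0 - vertex k0 i 0.
Proof. by rewrite mxE. Qed.

(* The rows are quadratic with coordinate sum 0, whereas the constant row of [vdm] is not. *)
Lemma rank_vertex_diff_mx_le2 k0 : (\rank (vertex_diff_mx k0) <= 2)%N.
Proof.
rewrite -ltnS -rank_vdm; apply: (mxrank_lt_annihilated (u := const_mx 1) (e := const_mx 1)).
- apply/row_subP => k; have -> : row k (vertex_diff_mx k0) = (vertex k - vertex k0)^T.
    apply/matrixP => j i; rewrite [j]ord1 [LHS]mxE vertex_diff_mxE.
    by move: (vertex k) (vertex k0) => v w; rewrite !mxE.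
  exact: quadraticB (quadratic_vertex _) (quadratic_vertex _).
- by apply: (eq_row_sub 0); apply/matrixP => ? ?; rewrite !mxE.
- apply/matrixP => k j; rewrite mxE [RHS]mxE.
  rewrite (eq_bigr (fun i => vertex k i 0 - vertex k0 i 0)) => [|i _].
    by rewrite sumrB -!/(coordsum _) !coordsum_vertex subrr.
  by rewrite vertex_diff_mxE [const_mx _ _ _]mxE mulr1.
- apply/eqP => /matrixP/(_ 0 0); rewrite !mxE; under eq_bigr do rewrite !mxE mulr1.
  by rewrite sumr_const card_ord; apply/eqP; rewrite pnatr_eq0 -lt0n (leq_trans _ n_ge3).
Qed.

Lemma rank_vertex_diff_mx_ge2 k0 : (2 <= \rank (vertex_diff_mx k0))%N.
Proof.
pose f (r : 'I_2) : 'I_n := if val r == 0%N then ordS k0 else ord_pred k0.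
pose g (r : 'I_2) : 'I_n := if val r == 0%N then k0 else ordS k0.
apply: leq_trans (mxrank_mxsub f g _).
have [kS kSS _] := ordS_neq3 k0 n_ge3.
have vp : vertex (ord_pred k0) k0 0 = 0 by rewrite -{2}(ord_predK k0) vertex_root_r.
rewrite mxrank_unit // unitmxE unitfE det_mx22 ![mxsub _ _ _ _ _]mxE !vertex_diff_mxE /f /g /=.
rewrite vp !vertex_root_l !vertex_root_r !subr0 mul0r subr0 mulf_neq0 // vertex_eq0 negb_or.
  exact/andP.
rewrite ord_predK [ordS k0 == k0]eq_sym kS andbT; apply: contra kSS => /eqP kp.
by rewrite kp ord_predK.
Qed.

Lemma rank_vertex_diff_mx k0 : \rank (vertex_diff_mx k0) = 2%N.
Proof. by apply/anti_leq; rewrite rank_vertex_diff_mx_le2 rank_vertex_diff_mx_ge2. Qed.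

End SquaredDistanceMatrix.

Theorem mainTheorem7 (R : realFieldType) (n : nat) (hn : (3 <= n)%N)
    (a : 'I_n -> R) (ha : forall i j : 'I_n, (i < j)%N -> a i < a j) :
  \rank (sqdist_mx a) = 3%N /\
  (forall k : 'I_n, in_col (sqdist_mx a) (uvec a k)) /\
  is_polygon_with_vertices (P_out (colnormalize (sqdist_mx a)))
    (fun k : 'I_n => (coordsum (uvec a k))^-1 *: uvec a k).
Proof.
split; first exact: rank_sqdist_mx hn ha.
split; first by move=> k; apply/(in_col_sqdist_mx hn ha)/quadratic_uvec.
split; first by move=> x; split; [exact: polytope_sub_conv | exact: polytope_conv].
split; first exact: vertex_inj hn ha.
split; last exact: rank_vertex_diff_mx hn ha.
move=> x; split=> [ext|[k ->]]; last exact: extreme_vertex.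
apply: (extreme_point_conv (polytope_conv hn ha) ext).
exact: polytope_sub_conv hn ha _ ext.1.
Qed.
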